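(* Let $R$ be a principal Artinian ring and let $f, g \in R[x]$ be nilpotent polynomials, not both zero. Let $d$ be a generator of the ideal $(c(f), c(g))$ and let $\tilde f, \tilde g \in R[x]$ satisfy $f = d\tilde f$ and $g = d\tilde g$. Then $$\mathrm{Rres}_R(f,g) = \{\, d s : s\in R,\ (s \bmod \mathrm{Ann}(d)) \in \mathrm{Rres}_{R/\mathrm{Ann}(d)}(\bar{\tilde f}, \bar{\tilde g})\,\}$$ (i.e. $\mathrm{rres}(f,g) = d\cdot\mathrm{rres}_{R/\mathrm{Ann}(d)}(\tilde f,\tilde g)$), and at least one of $\tilde f$, $\tilde g$ is not nilpotent.
   Context: A principal Artinian ring is a commutative ring with identity in which every ideal is principal and which satisfies the descending chain condition on ideals. For $f=\sum a_ix^i$, the content ideal is $C(f)=(a_0,\dots,a_d)$ and $c(f)$ is any generator of it. $\mathrm{Ann}(d)=\{s\in R: sd=0\}$; bars denote images in $(R/\mathrm{Ann}(d))[x]$. For a commutative ring $S$ and $f,g\in S[x]$, $\mathrm{Rres}_S(f,g)=(f,g)\cap S$ with $(f,g)$ the ideal of $S[x]$ generated by $f,g$. *)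

From HB Require Import structures.
From mathcomp Require Import all_boot all_algebra.
Set Implicit Arguments. Unset Strict Implicit. Unset Printing Implicit Defensive.
Import GRing.Theory.
Local Open Scope ring_scope.

Definition is_ideal (R : comNzRingType) (I : R -> Prop) : Prop :=
  [/\ I 0, (forall x y, I x -> I y -> I (x + y)) & (forall r x, I x -> I (r * x))].

Definition principal_ideal (R : comNzRingType) (a : R) : R -> Prop :=
  fun x => exists r, x = r * a.

Definition principal_ring (R : comNzRingType) : Prop :=
  forall I : R -> Prop, is_ideal I ->
    exists a, forall x, I x <-> principal_ideal a x.

Definition artinian (R : comNzRingType) : Prop :=
  forall I : nat -> R -> Prop, (forall n, is_ideal (I n)) ->
    (forall n x, I n.+1 x -> I n x) ->
    exists N, forall n, (N <= n)%N -> forall x, I n x <-> I N x.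

Definition principal_artinian (R : comNzRingType) : Prop :=
  principal_ring R /\ artinian R.

Definition ideal_gen (R : comNzRingType) (s : seq R) : R -> Prop :=
  fun x => exists r : 'I_(size s) -> R, x = \sum_(i < size s) r i * s`_i.

(* d generates the ideal (c(f), c(g)) = C(f) + C(g), generated by all the
   coefficients of f and of g. *)
Definition generates_content (R : comNzRingType) (d : R) (f g : {poly R}) : Prop :=
  forall x, ideal_gen ((f : seq R) ++ (g : seq R)) x <-> principal_ideal d x.

Definition nilpotent_poly (R : comNzRingType) (p : {poly R}) : Prop :=
  exists n : nat, p ^+ n = 0.

Definition Ann (R : comNzRingType) (d : R) : R -> Prop := fun s => s * d = 0.

(* Rres_R(f, g) = (f, g) ∩ R, the constants of the ideal (f,g) of R[x]. *)
Definition Rres (R : comNzRingType) (f g : {poly R}) : R -> Prop :=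
  fun r => exists u v : {poly R}, u * f + v * g = r%:P.

(* Membership of the class (s mod I) in Rres_{R/I}(fbar, gbar), for an ideal I
   of R, written out via lifts of the quotient polynomials: there are
   U, V in (R/I)[x] with U fbar + V gbar = (s mod I), i.e. lifts u, v in R[x]
   such that every coefficient of u f + v g - s lies in I. *)
Definition Rres_mod (R : comNzRingType) (I : R -> Prop) (f g : {poly R}) : R -> Prop :=
  fun s => exists u v : {poly R},
    forall i : nat, I (u * f + v * g - s%:P)`_i.

From HB Require Import structures.
From mathcomp Require Import all_boot all_algebra.
From mathcomp Require Import zify.
From Stdlib Require Import Classical_Prop.
Set Implicit Arguments. Unset Strict Implicit. Unset Printing Implicit Defensive.
Import GRing.Theory.
Local Open Scope ring_scope.

(* Write f = d ft and g = d gt.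
   1. The resultant identity is pure bookkeeping, valid over any commutative
      ring and for any d: a combination u f + v g equals d *: (u ft + v gt),
      and d *: h is a constant (d s)%:P exactly when every coefficient of
      h - s%:P is killed by d (lemma [Rres_scale]).
   2. For the second claim we use that nilpotent elements of a commutative
      ring form an ideal and that every coefficient of a nilpotent polynomial
      is nilpotent.  If ft and gt were both nilpotent, every coefficient of f
      and g would be d times a nilpotent element; as d lies in the ideal these
      coefficients generate, d = d N with N nilpotent, so d = d N^k = 0
      (lemma [generator_of_nilpotent_multiples_eq0]), forcing f = g = 0. *)

Definition nilpotent {S : comPzRingType} (x : S) : Prop := exists n : nat, x ^+ n = 0.

Section NilpotentIdeal.
Variable S : comPzRingType.

Lemma nilpotentD (a b : S) : nilpotent a -> nilpotent b -> nilpotent (a + b).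
Proof.
move=> [m am0] [n bn0]; exists (m + n)%N; rewrite exprDn; apply: big1 => i _.
have [le_mi | lt_im] := leqP m (m + n - i).
  by rewrite -(subnKC le_mi) exprD am0 !mul0r mul0rn.
have le_ni : (n <= i)%N by have := ltn_ord i; lia.
by rewrite -(subnKC le_ni) exprD bn0 mul0r mulr0 mul0rn.
Qed.

Lemma nilpotentMl (a b : S) : nilpotent b -> nilpotent (a * b).
Proof. by move=> [n bn0]; exists n; rewrite exprMn bn0 mulr0. Qed.

Lemma nilpotent_comb (n : nat) (r x : 'I_n -> S) :
  (forall i, nilpotent (x i)) -> nilpotent (\sum_(i < n) r i * x i).
Proof.
move=> nil_x; apply: (big_ind (@nilpotent S)) => [||i _]; last exact: nilpotentMl.
  by exists 1%N; rewrite expr1.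
exact: nilpotentD.
Qed.

Lemma fixed_by_nilpotent_eq0 (d N : S) : d = d * N -> nilpotent N -> d = 0.
Proof.
move=> dN [k Nk0]; have -> : d = d * N ^+ k; last by rewrite Nk0 mulr0.
by elim: k {Nk0} => [|k IHk]; rewrite ?mulr1 // exprS mulrA -dN.
Qed.

End NilpotentIdeal.

Section NilpotentPoly.
Variable R : comNzRingType.

(* If q * 'X is nilpotent then so is q, since (q * 'X)^m = q^m * 'X^m. *)
Lemma nilpotent_mulX (q : {poly R}) : nilpotent (q * 'X) -> nilpotent q.
Proof.
move=> [m qXm0]; exists m; apply/polyP => i.
move/(congr1 (fun p : {poly R} => p`_(i + m))): qXm0.
by rewrite exprMn coefMXn ltnNge leq_addl /= addnK !coef0.
Qed.

(* The constant term of a nilpotent polynomial is its value at 0. *)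
Lemma nilpotent_coef0 (p : {poly R}) : nilpotent p -> nilpotent p`_0.
Proof. by move=> [n pn0]; exists n; rewrite -horner_coef0 -horner_exp pn0 horner0. Qed.

(* Every coefficient of a nilpotent polynomial is nilpotent: removing the
   nilpotent constant term leaves q * 'X with q nilpotent, and the k+1-st
   coefficient of p is the k-th coefficient of q. *)
Lemma nilpotent_coef (p : {poly R}) (k : nat) : nilpotent p -> nilpotent p`_k.
Proof.
elim: k p => [|k IHk] p nil_p; first exact: nilpotent_coef0.
have p_split : p - (p`_0)%:P = drop_poly 1 p * 'X.
  apply/polyP => -[|i]; rewrite coefB coefC coefMX ?subrr //.
  by rewrite subr0 coef_drop_poly addn1.
have nil_p0 : nilpotent (- (p`_0)%:P).
  have [n p0n] := nilpotent_coef0 nil_p.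
  by rewrite -mulN1r; apply: nilpotentMl; exists n; rewrite -polyC_exp p0n.
have nil_q : nilpotent (drop_poly 1 p).
  by apply: nilpotent_mulX; rewrite -p_split; apply: nilpotentD.
by have := IHk _ nil_q; rewrite coef_drop_poly addn1.
Qed.

End NilpotentPoly.

(* Nakayama-type vanishing: if d lies in the ideal generated by a sequence
   whose entries are all d times nilpotent elements, then d = 0.  Indeed
   d = d * N for a linear combination N of nilpotent elements. *)
Lemma generator_of_nilpotent_multiples_eq0 (R : comNzRingType) (d : R)
    (s : seq R) (h : nat -> R) :
  ideal_gen s d -> (forall i, s`_i = d * h i) -> (forall i, nilpotent (h i)) ->
  d = 0.
Proof.
move=> [r d_comb] s_dh nil_h.
apply: (@fixed_by_nilpotent_eq0 _ d (\sum_(i < size s) r i * h i)).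
  by rewrite [LHS]d_comb mulr_sumr; apply: eq_bigr => i _; rewrite s_dh mulrCA.
exact: nilpotent_comb.
Qed.

Lemma scale_eq_polyC_Ann (R : comNzRingType) (d s : R) (h : {poly R}) :
  d *: h = (d * s)%:P <-> forall i, Ann d (h - s%:P)`_i.
Proof.
rewrite /Ann; split=> [dh i | ann_h].
  by rewrite mulrC -coefZ scalerBr dh scale_polyC subrr coef0.
apply/eqP; rewrite -subr_eq0 -scale_polyC -scalerBr; apply/eqP/polyP => i.
by rewrite coefZ coef0 mulrC ann_h.
Qed.

Lemma Rres_scale (R : comNzRingType) (d : R) (ft gt : {poly R}) (r : R) :
  Rres (d *: ft) (d *: gt) r <->
  exists s : R, r = d * s /\ Rres_mod (Ann d) ft gt s.
Proof.
have comb_scale u v : u * (d *: ft) + v * (d *: gt) = d *: (u * ft + v * gt).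
  by rewrite scalerDr !scalerAr.
split=> [[u [v]] | [s [-> [u [v ann_uv]]]]]; last first.
  by exists u, v; rewrite comb_scale; apply/scale_eq_polyC_Ann.
rewrite comb_scale => r_comb; set h := u * ft + v * gt in r_comb.
have r_eq : r = d * h`_0.
  by move/(congr1 (fun p : {poly R} => p`_0)): r_comb; rewrite coefZ coefC.
exists h`_0; split=> //; exists u, v; apply/scale_eq_polyC_Ann.
by rewrite -r_eq.
Qed.

Unset Implicit Arguments.

Theorem lemma5p4 (R : comNzRingType) (f g : {poly R}) (d : R) (ft gt : {poly R}) :
  principal_artinian R ->
  nilpotent_poly f -> nilpotent_poly g ->
  ~ (f = 0 /\ g = 0) ->
  generates_content d f g ->
  f = d *: ft -> g = d *: gt ->
  (forall r : R, Rres f g r <->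
     exists s : R, r = d * s /\ Rres_mod (Ann d) ft gt s)
  /\ (~ nilpotent_poly ft \/ ~ nilpotent_poly gt).
Proof.
move=> _ _ _ fg_neq0 d_gen f_eq g_eq; split.
  by move=> r; rewrite f_eq g_eq; apply: Rres_scale.
apply/not_and_or => -[nil_ft nil_gt]; apply: fg_neq0.
pose h i := if (i < size f)%N then ft`_i else gt`_(i - size f).
have d_in_content : ideal_gen ((f : seq R) ++ (g : seq R)) d.
  by apply/d_gen; exists 1; rewrite mul1r.
have coef_dh i : ((f : seq R) ++ (g : seq R))`_i = d * h i.
  by rewrite nth_cat /h f_eq g_eq; case: ifP => _; rewrite coefZ.
have nil_h i : nilpotent (h i).
  by rewrite /h; case: ifP => _; apply: nilpotent_coef.
have d0 := generator_of_nilpotent_multiples_eq0 d_in_content coef_dh nil_h.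
by rewrite f_eq g_eq d0 !scale0r.
Qed.
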